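(* Let $i\ge 3$ and $k\ge 3$ be integers, let $p$ be a nonnegative integer, and put $r=\lfloor (F_i-1)/F_k\rfloor$. If $r\ge p$ and $(r,p)\ne(0,0)$, then $$g_p(F_i,F_{i+2},F_{i+k})=\begin{cases}(F_i-rF_k-1)F_{i+2}+(r+p)F_{i+k}-F_i & \text{if } (F_i-rF_k)F_{i+2}\ge F_{k-2}F_i,\\ (F_k-1)F_{i+2}+(r+p-1)F_{i+k}-F_i & \text{if } (F_i-rF_k)F_{i+2}< F_{k-2}F_i.\end{cases}$$
   Context: Fibonacci numbers: $F_0=0$, $F_1=1$, $F_n=F_{n-1}+F_{n-2}$. For positive integers $a_1,\dots,a_l$ with $\gcd(a_1,\dots,a_l)=1$ and an integer $n$, let $d(n;a_1,\dots,a_l)$ be the number of tuples $(x_1,\dots,x_l)$ of nonnegative integers with $a_1x_1+\dots+a_lx_l=n$. For a nonnegative integer $p$, the $p$-Frobenius number $g_p(a_1,\dots,a_l)$ is the largest integer $n$ with $d(n;a_1,\dots,a_l)\le p$. *)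

From mathcomp Require Import all_boot all_order all_algebra.
Set Implicit Arguments. Unset Strict Implicit. Unset Printing Implicit Defensive.
Import Order.TTheory GRing.Theory Num.Theory.

Fixpoint fib (n : nat) : nat :=
  match n with
  | 0 => 0
  | 1 => 1
  | (m.+1 as k).+1 => fib k + fib m
  end.

(* d(n; a1,a2,a3) for a natural number n: number of triples (x1,x2,x3) of
   nonnegative integers with a1 x1 + a2 x2 + a3 x3 = n (all entries are
   bounded by n when the a_j are positive). *)
Definition dnat3 (a1 a2 a3 n : nat) : nat :=
  \sum_(x1 < n.+1) \sum_(x2 < n.+1) \sum_(x3 < n.+1)
     (a1 * x1 + a2 * x2 + a3 * x3 == n).

Definition d3 (a1 a2 a3 : nat) (n : int) : nat :=
  match n with
  | Posz m => dnat3 a1 a2 a3 m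
  | Negz _ => 0
  end.

Definition is_p_frobenius (p a1 a2 a3 : nat) (g : int) : Prop :=
  (d3 a1 a2 a3 g <= p)%N /\ (forall n : int, (g < n)%R -> (p < d3 a1 a2 a3 n)%N).

(* With a = F_i, b = F_(i+2), e = F_(k-2), f = F_k one has F_(i+k) = f b - e a, and a, b are
   coprime.  Hence every integer is n = b y0 + a m with 0 <= y0 < a, and the representations
   of n by (a, b, c) are exactly (m - b s + e z, y0 + a s - f z, z); since 2 a <= b and
   2 e <= f, nonnegativity leaves only s = 0 and s = 1.  For the candidate g every
   representation has s = 0 and z < p, so there are at most p of them.  For n > g, writing
   y0 = q f + rho, one finds p + 1 values of z: an interval ending at q with s = 0 if p <= q,
   and otherwise all z <= q with s = 0 together with the top p - q values with s = 1. *)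

Set Warnings "-notation-overridden,-ambiguous-paths".
From mathcomp Require Import all_boot all_order all_algebra zify ring.
Import Order.TTheory GRing.Theory Num.Theory.

Lemma fibSS n : fib n.+2 = fib n.+1 + fib n.
Proof. by []. Qed.

Lemma fibD m n : fib (m + n).+1 = fib m.+1 * fib n.+1 + fib m * fib n.
Proof.
elim/ltn_ind: m => -[|[|m]] IH.
- by rewrite add0n /=; lia.
- by rewrite add1n /=; lia.
rewrite addSn fibSS (IH m.+1) // addSn (IH m) // !fibSS; lia.
Qed.

Lemma fib_mulSS m n : fib m.+2 * fib n.+2 = fib (m + n).+2 + fib m * fib n.
Proof. rewrite -addSn fibD !fibSS; lia. Qed.

Lemma fib_gt0 n : 0 < n -> 0 < fib n.
Proof. by elim: n => // -[|n] // IH _; rewrite fibSS ltn_addr ?IH. Qed.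

Lemma fib_leSS n : 2 * fib n <= fib n.+2.
Proof. by case: n => // n; rewrite !fibSS; lia. Qed.

Lemma coprime_fibSS n : coprime (fib n) (fib n.+2).
Proof.
rewrite /coprime fibSS gcdnDr -/(coprime _ _).
by elim: n => // n IH; rewrite /coprime fibSS gcdnDl -/(coprime _ _) coprime_sym.
Qed.

Lemma dnat3E a1 a2 a3 m : dnat3 a1 a2 a3 m =
  #|[set t : 'I_m.+1 * ('I_m.+1 * 'I_m.+1) | a1 * t.1 + a2 * t.2.1 + a3 * t.2.2 == m]|.
Proof.
rewrite /dnat3 (eq_bigr (fun x1 : 'I_m.+1 => \sum_(t : 'I_m.+1 * 'I_m.+1)
  ((a1 * x1 + a2 * t.1 + a3 * t.2 == m) : nat))); last by move=> x1 _; rewrite pair_bigA.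
rewrite pair_bigA -sum1_card [RHS]big_mkcond /=; apply: eq_bigr => t _.
by rewrite inE; case: eqP.
Qed.

Local Open Scope ring_scope.

Definition representation (a1 a2 a3 n : int) (t : int * (int * int)) : Prop :=
  [/\ 0 <= t.1, 0 <= t.2.1, 0 <= t.2.2 & a1 * t.1 + a2 * t.2.1 + a3 * t.2.2 = n].

Lemma d3_le_param (a1 a2 a3 p : nat) (n : int) (X Y : int -> int) :
  (forall t, representation a1 a2 a3 n t ->
     t.2.2 < p /\ t.1 = X t.2.2 /\ t.2.1 = Y t.2.2) ->
  (d3 a1 a2 a3 n <= p)%N.
Proof.
case: n => [m|//] param; rewrite /d3 dnat3E.
pose h (j : 'I_p) : 'I_m.+1 * ('I_m.+1 * 'I_m.+1) :=
  (inord `|X j|, (inord `|Y j|, inord j)).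
rewrite -[p in (_ <= p)%N]card_ord -cardsT.
apply: leq_trans (leq_imset_card h _); apply/subset_leq_card/subsetP.
move=> [x [y z]]; rewrite inE /= => /eqP xyz.
have [zp [Ex Ey]] : z%:Z < p /\ x%:Z = X z /\ y%:Z = Y z.
  by apply: (param (x%:Z, (y%:Z, z%:Z))); split=> //=; rewrite -!PoszM -!PoszD xyz.
apply/imsetP; exists (Ordinal (zp : (z < p)%N)); first by rewrite inE.
by congr (_, (_, _)); apply: val_inj; rewrite /= -?Ex -?Ey ?absz_nat inordK.
Qed.

Definition has_reps (a1 a2 a3 n : int) (k : nat) : Prop :=
  exists (Z : seq nat) (X Y : nat -> int), [/\ uniq Z, size Z = k &
    forall z, z \in Z -> representation a1 a2 a3 n (X z, (Y z, z%:Z))].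

Lemma has_reps_le_d3 (a1 a2 a3 k : nat) (n : int) :
  (0 < a1)%N -> (0 < a2)%N -> (0 < a3)%N -> has_reps a1 a2 a3 n k ->
  (k <= d3 a1 a2 a3 n)%N.
Proof.
move=> a1_gt0 a2_gt0 a3_gt0 [Z [X [Y [uZ <- repZ]]]].
case: n repZ => [m|m] repZ; last first.
  by case: Z {uZ} repZ => // z Z /(_ z (mem_head _ _)) [/= ? ? ? ?]; nia.
have bnd z : z \in Z -> [/\ `|X z| < m.+1, `|Y z| < m.+1 & z < m.+1]%N.
  by move=> /repZ [/= ? ? ? ?]; split; nia.
pose h z : 'I_m.+1 * ('I_m.+1 * 'I_m.+1) := (inord `|X z|, (inord `|Y z|, inord z)).
have uhZ : uniq (map h Z).
  rewrite map_inj_in_uniq // => z z' /bnd [_ _ zm] /bnd [_ _ zm'] [_ _].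
  by move=> /(congr1 val); rewrite /= !inordK.
rewrite /d3 dnat3E -(size_map h) -(card_uniqP uhZ).
apply/subset_leq_card/subsetP => _ /mapP [z zZ ->].
have [/= xm ym zm] := bnd z zZ; rewrite inE /= !inordK //.
by have [/= ? ? _ ?] := repZ z zZ; apply/eqP; lia.
Qed.

(* In theorem5: a = F_i, b = F_(i+2), c = F_(i+k), e = F_(k-2), f = F_k,
   r = (F_i - 1) %/ F_k and al = F_i - r F_k, so that 1 <= al <= f. *)
Section Frobenius.
Variables (a b c e f al r : int) (p : nat).
Hypotheses (e_ge1 : 1 <= e) (f_ge2e : 2 * e <= f) (b_ge2a : 2 * a <= b)
  (aE : a = r * f + al) (al_ge1 : 1 <= al) (al_le_f : al <= f)
  (r_ge1 : 1 <= r) (p_le_r : p%:Z <= r) (coprime_ab : coprimez a b)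
  (cE : c = f * b - e * a).

Let e_gt0 : 0 < e. Proof. lia. Qed.
Let f_gt0 : 0 < f. Proof. lia. Qed.
Let a_gt0 : 0 < a. Proof. nia. Qed.
Let fb_ge4ea : 4 * e * a <= f * b. Proof. nia. Qed.

Definition frob : int :=
  if e * a <= al * b then (al - 1) * b + (r + p) * c - a
  else (f - 1) * b + (r + p - 1) * c - a.

(* [p f - 1] (resp. [p f - al - 1]) reduced into [0, a): for p = 0 this adds a. *)
Definition frob_y : int :=
  if e * a <= al * b then (if p == 0%N then a - 1 else p%:Z * f - 1)
  else (if p == 0%N then r * f - 1 else p%:Z * f - al - 1).

Definition frob_x : int :=
  if e * a <= al * b then (if p == 0%N then - e * r - 1 else b - e * (r + p) - 1)
  else (if p == 0%N then - e * (r - 1) - 1 else b - e * (r + p - 1) - 1).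

Lemma frobE : frob = b * frob_y + a * frob_x.
Proof.
by rewrite /frob /frob_y /frob_x cE; case: ifP => _; case: eqP => [->|_]; rewrite aE; ring.
Qed.

Lemma frob_y_range : 0 <= frob_y < a.
Proof.
by rewrite /frob_y; case: ifP => C; case: eqP => p0; apply/andP; split; nia.
Qed.

Lemma frob_x_lt : frob_x < b.
Proof. by rewrite /frob_x; case: ifP => _; case: eqP => _; nia. Qed.

Lemma representation_base n : exists y0 m, [/\ 0 <= y0, y0 < a & n = b * y0 + a * m].
Proof.
have /coprimezP [[u v] /= uv] := coprime_ab.
have := divz_eq (v * n) a; set t := (_ %/ _)%Z; set y0 := (_ %% _)%Z => vnE.
exists y0, (u * n + b * t); split; [exact: modz_ge0 _ (lt0r_neq0 a_gt0) | exact: ltz_pmod |].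
have -> : y0 = v * n - t * a by rewrite vnE; ring.
by rewrite -[LHS]mul1r -uv; ring.
Qed.

Lemma representation_shift x y z y0 m :
  a * x + b * y + c * z = b * y0 + a * m ->
  exists s, y = y0 + s * a - f * z /\ x = m - b * s + e * z.
Proof.
rewrite cE => xyz.
have bD : b * (y + f * z - y0) = a * (m + e * z - x) by lia.
have /dvdzP [s Ds] : (a %| y + f * z - y0)%Z.
  by rewrite -(Gauss_dvdzr _ coprime_ab) bD; apply/dvdzP; exists (m + e * z - x); ring.
exists s; split; first lia.
have : a * (m + e * z - x - b * s) = 0 by rewrite mulrBr -bD Ds; ring.
by move/eqP; rewrite mulf_eq0 (gt_eqF a_gt0) /= subr_eq0 => /eqP; lia.
Qed.

Lemma shift_01 {y0 m x y z s} : 0 <= y0 < a -> m < b ->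
  0 <= x -> 0 <= y -> 0 <= z ->
  y = y0 + s * a - f * z -> x = m - b * s + e * z -> s = 0 \/ s = 1.
Proof.
move=> /andP [y0_ge0 y0_lt] m_lt x_ge0 y_ge0 z_ge0 yE xE.
have s_ge0 : 0 <= s.
  case: (lerP 0 s) => // s_lt0.
  have : s * a <= - a by nia.
  nia.
case: (lerP s 1) => s_le1; first lia.
have fz_le : f * z <= y0 + s * a by lia.
have : f * (b * s - e * z) >= f * b * s - e * (y0 + s * a) by nia.
have : f * b * s - e * (y0 + s * a) >= f * b by nia.
have : b * s - e * z >= b by nia.
lia.
Qed.

Lemma frob_shift0 z : 0 <= z -> 0 <= frob_x + e * z -> 0 <= frob_y - f * z -> z < p.
Proof.
rewrite /frob_x /frob_y; case: ifP => C; case: eqP => p0 z_ge0 x_ge0 y_ge0;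
  try by rewrite -(ltr_pM2l f_gt0); lia.
- have : r < z by rewrite -(ltr_pM2l e_gt0); lia.
  nia.
- have : r - 1 < z by rewrite -(ltr_pM2l e_gt0); lia.
  nia.
Qed.

Lemma frob_no_shift1 z : 0 <= z -> 0 <= frob_x - b + e * z -> 0 <= frob_y + a - f * z -> False.
Proof.
rewrite /frob_x /frob_y; case: ifP => C; case: eqP => p0 z_ge0 x_ge0 y_ge0.
- have : f * (b + e * r + 1) <= f * (e * z) by apply: ler_wpM2l; lia.
  have : e * (f * z) <= e * (2 * a - 1) by apply: ler_wpM2l; lia.
  nia.
- have : r + p < z by rewrite -(ltr_pM2l e_gt0); lia.
  nia.
- have : f * (b + e * (r - 1) + 1) <= f * (e * z) by apply: ler_wpM2l; lia.
  have : e * (f * z) <= e * (2 * a - 1) by apply: ler_wpM2l; lia.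
  nia.
- have : r + p - 1 < z by rewrite -(ltr_pM2l e_gt0); lia.
  nia.
Qed.

Lemma frob_representation t : representation a b c frob t ->
  t.2.2 < p /\ t.1 = frob_x + e * t.2.2 /\ t.2.1 = frob_y - f * t.2.2.
Proof.
case: t => x [y z] [/= x_ge0 y_ge0 z_ge0].
rewrite frobE => /representation_shift [s [yE xE]].
have [s0|s1] := shift_01 frob_y_range frob_x_lt x_ge0 y_ge0 z_ge0 yE xE.
  rewrite s0 in xE yE; split; last lia.
  by apply: frob_shift0 => //; lia.
by exfalso; apply: (frob_no_shift1 _ z_ge0); rewrite s1 in xE yE; lia.
Qed.

Lemma frob_low_start {q rho y0 m : int} : frob < b * y0 + a * m ->
  y0 = q * f + rho -> 0 <= q -> 0 <= rho < f -> y0 < a -> p%:Z <= q ->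
  0 <= m + e * (q - p%:Z).
Proof.
move=> n_gt y0E q_ge0 /andP [rho_ge0 rho_lt] y0_lt p_le_q.
suff : a * (- (e * (q - p%:Z))) < a * (m + 1) by rewrite ltr_pM2l //; lia.
have q_le_r : q < r + 1 by rewrite -(ltr_pM2l f_gt0); lia.
have p_ca : 0 <= p%:Z * (c - a * e) by apply: mulr_ge0; lia.
(* In each case [frob + a - (b y0 - a e (q - p))] is a nonnegative combination of the
   products below and of the sign of [al b - e a]. *)
move: n_gt; rewrite /frob y0E; have [q_eq_r|q_lt_r] := eqVneq q r.
- have h : 0 <= b * (al - 1 - rho) by apply: mulr_ge0; lia.
  by case: (lerP (e * a) (al * b)) => C n_gt; rewrite cE aE q_eq_r in C n_gt p_ca h *; lia.
- have h1 : 0 <= (r - q - 1) * c by apply: mulr_ge0; lia.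
  have h2 : 0 <= b * (f - 1 - rho) by apply: mulr_ge0; lia.
  by case: (lerP (e * a) (al * b)) => C n_gt; rewrite cE aE in C n_gt p_ca h1 h2 *; lia.
Qed.

Lemma floor_shift_range {q rho y0 Z1 : int} : y0 = q * f + rho -> 0 <= rho < f ->
  f * Z1 <= y0 + a < f * Z1 + f -> q + r <= Z1 <= q + r + 1.
Proof.
move=> y0E /andP [rho_ge0 rho_lt] /andP [Z1_lo Z1_hi].
have : q + r < Z1 + 1 by rewrite -(ltr_pM2l f_gt0); lia.
have : Z1 < q + r + 2 by rewrite -(ltr_pM2l f_gt0); lia.
lia.
Qed.

Lemma frob_high_start {q rho y0 m Z1 : int} : frob < b * y0 + a * m ->
  y0 = q * f + rho -> 0 <= q -> 0 <= rho < f -> q < p%:Z ->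
  f * Z1 <= y0 + a < f * Z1 + f ->
  0 <= m - b + e * (Z1 + q + 1 - p%:Z).
Proof.
move=> n_gt y0E q_ge0 rho_range q_lt_p Z1_range.
have /andP [Z1_ge Z1_le] := floor_shift_range y0E rho_range Z1_range.
move: rho_range Z1_range => /andP [rho_ge0 rho_lt] /andP [Z1_lo Z1_hi].
suff : a * (b - e * (Z1 + q + 1 - p%:Z)) < a * (m + 1) by rewrite ltr_pM2l //; lia.
have h0 : 0 <= (p%:Z - q - 1) * (c - a * e) by apply: mulr_ge0; lia.
move: n_gt; rewrite /frob y0E; have [Z1E|Z1E] : Z1 = q + r \/ Z1 = q + r + 1 by lia.
- have h : 0 <= b * (f - 1 - rho - al) by apply: mulr_ge0; lia.
  by case: (lerP (e * a) (al * b)) => C n_gt; rewrite cE aE Z1E in C n_gt h0 h *; lia.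
- have h : 0 <= b * (f - 1 - rho) by apply: mulr_ge0; lia.
  by case: (lerP (e * a) (al * b)) => C n_gt; rewrite cE aE Z1E in C n_gt h0 h *; lia.
Qed.

Lemma representation_param (y0 m z : int) : 0 <= z -> 0 <= m + e * z -> f * z <= y0 ->
  representation a b c (b * y0 + a * m) (m + e * z, (y0 - f * z, z)).
Proof. by move=> z_ge0 x_ge0 fz_le; split=> //=; [lia | rewrite cE; ring]. Qed.

Lemma frob_reps_low (q : nat) (rho y0 m : int) : frob < b * y0 + a * m ->
  y0 = q%:Z * f + rho -> 0 <= rho < f -> y0 < a -> (p <= q)%N ->
  has_reps a b c (b * y0 + a * m) p.+1.
Proof.
move=> n_gt y0E rho_range y0_lt p_le_q.
have := frob_low_start n_gt y0E (le0z_nat q) rho_range y0_lt; rewrite lez_nat => /(_ p_le_q) x_ge0.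
exists (iota (q - p) p.+1), (fun j => m + e * j%:Z), (fun j => y0 - f * j%:Z).
split; [exact: iota_uniq | by rewrite size_iota |].
move=> j; rewrite mem_iota => /andP [j_ge j_lt]; apply: representation_param => //.
- have : e * (q%:Z - p%:Z) <= e * j%:Z by apply: ler_wpM2l; lia.
  lia.
- have : f * j%:Z <= f * q%:Z by apply: ler_wpM2l; lia.
  lia.
Qed.

Lemma frob_reps_high (q : nat) (rho y0 m : int) : frob < b * y0 + a * m ->
  y0 = q%:Z * f + rho -> 0 <= rho < f -> (q < p)%N ->
  has_reps a b c (b * y0 + a * m) p.+1.
Proof.
move=> n_gt y0E rho_range q_lt_p.
have [Z1 Z1_range] : exists Z1 : nat, f * Z1%:Z <= y0 + a < f * Z1%:Z + f.
  have y0_ge0 : 0 <= y0 by lia.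
  have := divz_eq (y0 + a) f; have := ltz_pmod (y0 + a) f_gt0.
  have := modz_ge0 (y0 + a) (lt0r_neq0 f_gt0).
  have : 0 <= ((y0 + a) %/ f)%Z by rewrite divz_ge0 //; lia.
  by exists `|((y0 + a) %/ f)%Z|%N; nia.
have /andP [Z1_ge Z1_le] := floor_shift_range y0E rho_range Z1_range.
have := frob_high_start n_gt y0E (le0z_nat q) rho_range; rewrite ltz_nat.
move=> /(_ Z1 q_lt_p Z1_range) x1_ge0.
pose Z0 := (Z1 + q.+1 - p)%N.
have Z0E : Z0%:Z = Z1%:Z + q%:Z + 1 - p%:Z by rewrite /Z0; lia.
have eZ0_le : e * Z0%:Z <= b.
  have : e * Z0%:Z <= e * (2 * r) by apply: ler_wpM2l; lia.
  nia.
(* z <= q with s = 0, and Z0 <= z <= Z1 with s = 1, i.e. with base point (y0 + a, m - b). *)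
exists (iota 0 q.+1 ++ iota Z0 (p - q)),
  (fun j => if (j <= q)%N then m + e * j%:Z else m - b + e * j%:Z),
  (fun j => if (j <= q)%N then y0 - f * j%:Z else y0 + a - f * j%:Z).
split.
- rewrite cat_uniq !iota_uniq andbT; apply/hasPn => j.
  by rewrite !mem_iota; lia.
- by rewrite size_cat !size_iota; lia.
move=> j; rewrite mem_cat !mem_iota => /orP [] /andP [j_ge j_lt].
  have j_le : (j <= q)%N by lia.
  rewrite /= j_le.
  apply: representation_param; [lia | | ].
  + have : 0 <= e * j%:Z by apply: mulr_ge0; lia.
    lia.
  + have : f * j%:Z <= f * q%:Z by apply: ler_wpM2l; lia.
    lia.
have /negbTE j_gt : ~~ (j <= q)%N by rewrite -ltnNge; lia.
rewrite /= j_gt.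
have -> : b * y0 + a * m = b * (y0 + a) + a * (m - b) by ring.
apply: representation_param; [lia | | ].
- have : e * Z0%:Z <= e * j%:Z by apply: ler_wpM2l; lia.
  lia.
- have : f * j%:Z <= f * Z1%:Z by apply: ler_wpM2l; lia.
  lia.
Qed.

Lemma frob_many_reps n : frob < n -> has_reps a b c n p.+1.
Proof.
move=> n_gt; have [y0 [m [y0_ge0 y0_lt nE]]] := representation_base n.
rewrite nE in n_gt *.
have [q [rho [rho_range y0E]]] : exists (q : nat) rho, 0 <= rho < f /\ y0 = q%:Z * f + rho.
  have := modz_ge0 y0 (lt0r_neq0 f_gt0); have := ltz_pmod y0 f_gt0.
  have : 0 <= (y0 %/ f)%Z by rewrite divz_ge0.
  exists `|(y0 %/ f)%Z|%N, (y0 %% f)%Z; split; first lia.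
  by rewrite {1}(divz_eq y0 f); lia.
have [p_le_q|q_lt_p] := leqP p q.
  exact: frob_reps_low n_gt y0E rho_range y0_lt p_le_q.
exact: frob_reps_high n_gt y0E rho_range q_lt_p.
Qed.

Theorem frob_is_p_frobenius : is_p_frobenius p `|a| `|b| `|c| frob.
Proof.
have [b_gt0 c_gt0] : 0 < b /\ 0 < c by split; nia.
have absE := (gez0_abs (ltW a_gt0), gez0_abs (ltW b_gt0), gez0_abs (ltW c_gt0)).
split.
  apply: (@d3_le_param _ _ _ _ _ (fun z => frob_x + e * z) (fun z => frob_y - f * z)).
  by rewrite !absE; apply: frob_representation.
move=> n /frob_many_reps reps.
by apply: has_reps_le_d3; rewrite ?absE //; lia.
Qed.

End Frobenius.

Theorem theorem5 (i k p : nat) (hi : (3 <= i)%N) (hk : (3 <= k)%N) :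
  let r := ((fib i - 1) %/ fib k)%N in
  (p <= r)%N -> (r, p) != (0%N, 0%N) ->
  is_p_frobenius p (fib i) (fib (i + 2)) (fib (i + k))
    (if ((fib i - r * fib k) * fib (i + 2) >= fib (k - 2) * fib i)%N
     then ((fib i - r * fib k - 1)%N%:Z * (fib (i + 2))%:Z
           + (r + p)%N%:Z * (fib (i + k))%:Z - (fib i)%:Z)
     else ((fib k - 1)%N%:Z * (fib (i + 2))%:Z
           + (r + p)%:Z * (fib (i + k))%:Z - (fib (i + k))%:Z - (fib i)%:Z)).
Proof.
case: k hk => [|[|k]] // hk; rewrite !subSS subn0 => r p_le_r rp_neq0.
have f_gt0 : (0 < fib k.+2)%N by apply: fib_gt0.
have r_lo : (r * fib k.+2 <= fib i - 1)%N by apply: leq_divM.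
have r_hi : (fib i - 1 < r.+1 * fib k.+2)%N by apply: ltn_ceil.
have fi_gt0 : (0 < fib i)%N by apply: fib_gt0; lia.
have r_gt0 : (0 < r)%N by move: rp_neq0; rewrite xpair_eqE; lia.
have cE : (fib k.+2 * fib (i + 2) = fib (i + k.+2) + fib k * fib i)%N.
  by rewrite addn2 !addnS (addnC i k) fib_mulSS.
set G := (if _ then _ else _).
have -> : G = frob (fib i) (fib (i + 2)) (fib (i + k.+2))
    (fib k) (fib k.+2) (fib i - r * fib k.+2)%N r p.
  have C : (fib k)%:Z * fib i <= (fib i - r * fib k.+2)%N%:Z * fib (i + 2) =
      (fib k * fib i <= (fib i - r * fib k.+2) * fib (i + 2))%N by rewrite -!PoszM.
  by rewrite /G /frob C; case: ifP => _; rewrite -subzn ?PoszD; [ring | lia | ring | lia].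
have fi2 : (2 * fib i <= fib (i + 2))%N by rewrite addn2 fib_leSS.
have fk2 := fib_leSS k.
have fk_gt0 : (0 < fib k)%N by apply: fib_gt0; lia.
apply: frob_is_p_frobenius; try lia.
by rewrite coprimezE /= addn2 coprime_fibSS.
Qed.
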